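(* Let $q>1$ be an integer reducer capacity and consider $m$ inputs each of size one. Then every A2A mapping schema for these inputs has communication cost at least $m\left\lfloor\frac{m-1}{q-1}\right\rfloor$ and uses at least $\left\lfloor\frac{m}{q}\right\rfloor\left\lfloor\frac{m-1}{q-1}\right\rfloor$ reducers.
   Context: An A2A mapping schema for inputs with sizes $w_1,\dots,w_m$ and reducer capacity $q$ is an assignment of the inputs to a collection of reducers (each input may go to several reducers) such that every reducer receives inputs of total size at most $q$ and every pair of distinct inputs is assigned together to at least one reducer. The communication cost is the sum over reducers of the total size of the inputs assigned to it. *)

From mathcomp Require Import all_boot.
Set Implicit Arguments. Unset Strict Implicit. Unset Printing Implicit Defensive.

(* Inputs are indexed by 'I_m, with sizes w : 'I_m -> nat.
   A mapping schema is a finite list of reducers, each reducer being the set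
   of inputs assigned to it. *)

Definition load (m : nat) (w : 'I_m -> nat) (r : {set 'I_m}) : nat :=
  \sum_(i in r) w i.

Definition is_A2A_schema (m : nat) (w : 'I_m -> nat) (q : nat)
    (rs : seq {set 'I_m}) : Prop :=
  (forall r, r \in rs -> load w r <= q) /\
  (forall i j : 'I_m, i != j -> exists2 r, r \in rs & (i \in r) && (j \in r)).

Definition comm_cost (m : nat) (w : 'I_m -> nat) (rs : seq {set 'I_m}) : nat :=
  \sum_(r <- rs) load w r.

From mathcomp Require Import all_boot.

Set Implicit Arguments.
Unset Strict Implicit.
Unset Printing Implicit Defensive.

(* Every other input must meet input i in some reducer containing i, and such a
   reducer has room for at most q - 1 of them; so i lies in at least
   (m - 1) / (q - 1) reducers, which gives the cost bound by summing over i.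
   Each reducer carries at most q units of cost, whence the bound on their
   number. *)

Lemma leq_card_bigcup_seq (T : finType) (I : Type) (s : seq I) (P : pred I)
    (F : I -> {set T}) :
  #|\bigcup_(r <- s | P r) F r| <= \sum_(r <- s | P r) #|F r|.
Proof.
elim: s => [|x s IH]; first by rewrite !big_nil cards0.
rewrite !big_cons; case: (P x) => //.
exact: leq_trans (leq_card_setU _ _) (leq_add _ IH).
Qed.

Lemma load1 m (r : {set 'I_m}) : load (fun=> 1) r = #|r|.
Proof. by rewrite /load sum1_card. Qed.

Lemma comm_cost_count m (w : 'I_m -> nat) (rs : seq {set 'I_m}) :
  comm_cost w rs = \sum_i w i * count (fun r : {set 'I_m} => i \in r) rs.
Proof.
rewrite /comm_cost /load (exchange_big_dep predT) //=.
apply: eq_bigr => i _; rewrite -sum1_count big_distrr /=.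
by under [RHS]eq_bigr do rewrite muln1.
Qed.

Lemma comm_cost_le_size m (w : 'I_m -> nat) q (rs : seq {set 'I_m}) :
  (forall r, r \in rs -> load w r <= q) -> comm_cost w rs <= size rs * q.
Proof.
move=> loadq; rewrite /comm_cost -sum1_size big_distrl /= big_seq [X in _ <= X]big_seq.
by apply: leq_sum => r /loadq; rewrite mul1n.
Qed.

Section UnitInputs.

Variables (m q : nat) (rs : seq {set 'I_m}).
Hypotheses (q_gt1 : 1 < q) (schema : is_A2A_schema (fun=> 1) q rs).

Lemma card_reducer_le r : r \in rs -> #|r| <= q.
Proof. by rewrite -load1; apply: schema.1. Qed.

Lemma others_covered (i : 'I_m) :
  [set~ i] \subset \bigcup_(r <- rs | i \in r) (r :\ i).
Proof.
apply/subsetP => j; rewrite in_setC1 => ji.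
have [r r_rs /andP[ir jr]] := schema.2 i j ltac:(by rewrite eq_sym).
by rewrite (big_rem r) //= ir in_setU in_setD1 ji jr.
Qed.

Lemma count_reducers_containing (i : 'I_m) :
  (m - 1) %/ (q - 1) <= count (fun r : {set 'I_m} => i \in r) rs.
Proof.
have q1_gt0 : 0 < q - 1 by rewrite subn_gt0.
rewrite -(mulnK (count _ rs) q1_gt0) leq_div2r //.
have <- : #|[set~ i]| = m - 1 by rewrite cardsC1 card_ord subn1.
apply: leq_trans (subset_leq_card (others_covered i)) _.
apply: leq_trans (leq_card_bigcup_seq _ _ _) _.
rewrite -sum1_count big_distrl /= big_seq_cond [X in _ <= X]big_seq_cond.
apply: leq_sum => r /andP[r_rs ir].
rewrite mul1n subn1 -ltnS (ltn_predK q_gt1).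
by have := card_reducer_le r_rs; rewrite (cardsD1 i r) ir add1n.
Qed.

Lemma comm_cost_lower_bound :
  m * ((m - 1) %/ (q - 1)) <= comm_cost (fun=> 1) rs.
Proof.
rewrite comm_cost_count -[m in m * _]card_ord -sum_nat_const.
by apply: leq_sum => i _; rewrite mul1n count_reducers_containing.
Qed.

End UnitInputs.

Theorem theorem6 (m q : nat) (rs : seq {set 'I_m}) :
  1 < q ->
  is_A2A_schema (fun _ : 'I_m => 1) q rs ->
  m * ((m - 1) %/ (q - 1)) <= comm_cost (fun _ : 'I_m => 1) rs /\
  (m %/ q) * ((m - 1) %/ (q - 1)) <= size rs.
Proof.
move=> q_gt1 schema; have cost_ge := comm_cost_lower_bound q_gt1 schema.
split=> //.
have q_gt0 : 0 < q by apply: ltnW.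
rewrite -(leq_pmul2r q_gt0) mulnAC.
apply: leq_trans (comm_cost_le_size schema.1).
by apply: leq_trans cost_ge; rewrite leq_mul2r leq_divM orbT.
Qed.
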